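(* Let $\mathbf{k}$ be a commutative ring and $(\mathcal{C},\Pi,\xi)$ a supercategory. (i) There is a superfunctor $\Phi:\mathcal{C}^{ct}\to\mathcal{C}^{rev}$ given by $\Phi(X,\varphi)=X$ with $\alpha_\Phi(X,\varphi)=\varphi^{-1}:\Phi\Pi^{ct}(X,\varphi)=X\to\Pi X=\Pi^{rev}\Phi(X,\varphi)$. (ii) Assume $\mathcal{C}$ is $\mathbf{k}$-linear additive and $2$ is invertible in $\mathbf{k}$. (a) There is a superfunctor $\Psi:\mathcal{C}^{rev}\to\mathcal{C}^{ct}$ with $\Psi(X)=(X\oplus\Pi X,\varphi_X)$ and $\alpha_\Psi(X)=\psi_X:\Psi\Pi^{rev}(X)=\Pi X\oplus\Pi^2X\to X\oplus\Pi X=\Pi^{ct}\Psi(X)$, where $\varphi_X=\begin{pmatrix}0&\xi_X\\ \mathrm{id}_{\Pi X}&0\end{pmatrix}$ and $\psi_X=\begin{pmatrix}0&-\xi_X\\ \mathrm{id}_{\Pi X}&0\end{pmatrix}$ as maps $\Pi X\oplus\Pi^2X\to X\oplus\Pi X$. (b) There are canonical isomorphisms $\Phi\Psi(X)\cong X\oplus\Pi X$ and $\Psi\Phi(Z)\cong Z\oplus\Pi^{ct}Z$, functorial in $X\in\mathcal{C}$ and $Z\in\mathcal{C}^{ct}$. (iii) There are isomorphisms $\Pi\circ\Phi\cong\Phi\circ\Pi^{ct}\cong\Phi$ and $\Pi^{ct}\circ\Psi\cong\Psi\circ\Pi\cong\Psi$. (iv) $\Phi$ and $\Psi$ are biadjoint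 to each other ($\Phi$ is both a left and a right adjoint of $\Psi$).
   Context: A supercategory is a $\mathbf{k}$-linear additive category $\mathcal{C}$ with an endofunctor $\Pi$ and an isomorphism $\xi:\Pi^2\xrightarrow\sim\mathrm{id}_{\mathcal{C}}$ such that $\xi\circ\Pi=\Pi\circ\xi$. A superfunctor $(F,\alpha_F):(\mathcal{C},\Pi,\xi)\to(\mathcal{C}',\Pi',\xi')$ is a functor $F$ with an isomorphism $\alpha_F:F\circ\Pi\xrightarrow\sim\Pi'\circ F$ such that $(\xi'\circ F)\circ(\Pi'\circ\alpha_F)\circ(\alpha_F\circ\Pi)=F\circ\xi$. The reversed supercategory is $\mathcal{C}^{rev}=(\mathcal{C},\Pi,-\xi)$. The Clifford twist $\mathcal{C}^{ct}$ has objects pairs $(X,\varphi)$ with $\varphi:\Pi X\xrightarrow\sim X$ satisfying $\varphi\circ\Pi\varphi=\xi_X$, morphisms $(X,\varphi)\to(X',\varphi')$ those $f:X\to X'$ with $f\circ\varphi=\varphi'\circ\Pi f$, $\Pi^{ct}(X,\varphi)=(X,-\varphi)$ and $\xi^{ct}=\mathrm{id}$. *)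

From HB Require Import structures.
From mathcomp Require Import all_boot all_algebra.
Set Implicit Arguments. Unset Strict Implicit. Unset Printing Implicit Defensive.
Import GRing.Theory.
Local Open Scope ring_scope.

(* Used as the common
   interface for C^rev and C^ct, between which superfunctors go.            *)
Record scat := SCat {
  sobj :> Type;
  shom : sobj -> sobj -> Type;
  sid : forall X, shom X X;
  scomp : forall X Y Z, shom Y Z -> shom X Y -> shom X Z;
  sPi : sobj -> sobj;
  sPim : forall X Y, shom X Y -> shom (sPi X) (sPi Y);
  sxi : forall X, shom (sPi (sPi X)) X }.
Arguments shom {s}. Arguments sid {s} X. Arguments scomp {s X Y Z}.
Arguments sPi {s}. Arguments sPim {s X Y}. Arguments sxi {s} X.

Record fdata (D E : scat) := FData {
  fo : D -> E;
  fm : forall X Y : D, shom X Y -> shom (fo X) (fo Y) }.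
Arguments fo {D E}. Arguments fm {D E} f {X Y}.

Definition is_functor (D E : scat) (F : fdata D E) : Prop :=
  (forall X : D, fm F (sid X) = sid (fo F X)) /\
  (forall (X Y Z : D) (g : shom Y Z) (f : shom X Y),
      fm F (scomp g f) = scomp (fm F g) (fm F f)).

Definition fcomp (D E G : scat) (G' : fdata E G) (F : fdata D E) : fdata D G :=
  @FData D G (fun X => fo G' (fo F X)) (fun X Y f => fm G' (fm F f)).
Definition fid (D : scat) : fdata D D := @FData D D (fun X => X) (fun X Y f => f).
Definition fPi (D : scat) : fdata D D := @FData D D sPi (fun X Y f => sPim f).

Definition is_nat (D E : scat) (F G : fdata D E)
    (eta : forall X : D, shom (fo F X) (fo G X)) : Prop :=
  forall (X Y : D) (f : shom X Y), scomp (eta Y) (fm F f) = scomp (fm G f) (eta X).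
Arguments is_nat {D E} F G eta.

Definition is_iso_s (E : scat) (X Y : E) (f : shom X Y) : Prop :=
  exists g : shom Y X, scomp g f = sid X /\ scomp f g = sid Y.

Definition nat_iso (D E : scat) (F G : fdata D E) : Prop :=
  exists eta : forall X : D, shom (fo F X) (fo G X),
    is_nat F G eta /\ forall X, is_iso_s (eta X).

Definition is_superfunctor (D E : scat) (F : fdata D E)
    (alpha : forall X : D, shom (fo F (sPi X)) (sPi (fo F X))) : Prop :=
  [/\ is_functor F,
      is_nat (fcomp F (fPi D)) (fcomp (fPi E) F) alpha,
      (forall X, is_iso_s (alpha X)) &
      forall X : D,
        scomp (sxi (fo F X)) (scomp (sPim (alpha X)) (alpha (sPi X)))
        = fm F (sxi X)].

Definition adjoint (D E : scat) (F : fdata D E) (G : fdata E D) : Prop :=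
  exists (eta : forall X : D, shom X (fo G (fo F X)))
         (eps : forall Y : E, shom (fo F (fo G Y)) Y),
    [/\ is_nat (fid D) (fcomp G F) eta,
        is_nat (fcomp F G) (fid E) eps,
        (forall X : D, scomp (eps (fo F X)) (fm F (eta X)) = sid (fo F X)) &
        (forall Y : E, scomp (fm G (eps Y)) (eta (fo G Y)) = sid (fo G Y))].

Record scdata (k : comPzRingType) := SCData {
  Ob :> Type;
  Hm : Ob -> Ob -> lmodType k;
  mid : forall X, Hm X X;
  mcomp : forall X Y Z, Hm Y Z -> Hm X Y -> Hm X Z;
  zob : Ob;
  bsum : Ob -> Ob -> Ob;
  bi1 : forall X Y, Hm X (bsum X Y);
  bi2 : forall X Y, Hm Y (bsum X Y);
  bp1 : forall X Y, Hm (bsum X Y) X;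
  bp2 : forall X Y, Hm (bsum X Y) Y;
  Pi : Ob -> Ob;
  Pim : forall X Y, Hm X Y -> Hm (Pi X) (Pi Y);
  xi : forall X, Hm (Pi (Pi X)) X }.
Arguments Hm {k s}. Arguments mid {k s} X. Arguments mcomp {k s X Y Z}.
Arguments zob {k s}. Arguments bsum {k s}.
Arguments bi1 {k s} X Y. Arguments bi2 {k s} X Y.
Arguments bp1 {k s} X Y. Arguments bp2 {k s} X Y.
Arguments Pi {k s}. Arguments Pim {k s X Y}. Arguments xi {k s} X.

Notation "g '∘' f" := (mcomp g f) (at level 40, left associativity).

Record sc_axioms (k : comPzRingType) (C : scdata k) : Prop := SCAxioms {
  ax_compA : forall (X Y Z W : C) (h : Hm Z W) (g : Hm Y Z) (f : Hm X Y),
      h ∘ (g ∘ f) = (h ∘ g) ∘ f;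
  ax_comp1 : forall (X Y : C) (f : Hm X Y), mid Y ∘ f = f;
  ax_compm1 : forall (X Y : C) (f : Hm X Y), f ∘ mid X = f;
  ax_compDl : forall (X Y Z : C) (g1 g2 : Hm Y Z) (f : Hm X Y),
      (g1 + g2) ∘ f = (g1 ∘ f) + (g2 ∘ f);
  ax_compZl : forall (X Y Z : C) (a : k) (g : Hm Y Z) (f : Hm X Y),
      (a *: g) ∘ f = a *: (g ∘ f);
  ax_compDr : forall (X Y Z : C) (g : Hm Y Z) (f1 f2 : Hm X Y),
      g ∘ (f1 + f2) = (g ∘ f1) + (g ∘ f2);
  ax_compZr : forall (X Y Z : C) (a : k) (g : Hm Y Z) (f : Hm X Y),
      g ∘ (a *: f) = a *: (g ∘ f);
  ax_zero : mid (zob : C) = 0;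
  ax_b11 : forall X Y : C, bp1 X Y ∘ bi1 X Y = mid X;
  ax_b22 : forall X Y : C, bp2 X Y ∘ bi2 X Y = mid Y;
  ax_b12 : forall X Y : C, bp1 X Y ∘ bi2 X Y = 0;
  ax_b21 : forall X Y : C, bp2 X Y ∘ bi1 X Y = 0;
  ax_bsum : forall X Y : C,
      (bi1 X Y ∘ bp1 X Y) + (bi2 X Y ∘ bp2 X Y) = mid (bsum X Y);
  ax_Pi1 : forall X : C, Pim (mid X) = mid (Pi X);
  ax_PiM : forall (X Y Z : C) (g : Hm Y Z) (f : Hm X Y), Pim (g ∘ f) = Pim g ∘ Pim f;
  ax_PiD : forall (X Y : C) (f g : Hm X Y), Pim (f + g) = Pim f + Pim g;
  ax_PiZ : forall (X Y : C) (a : k) (f : Hm X Y), Pim (a *: f) = a *: Pim f;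
  ax_xinat : forall (X Y : C) (f : Hm X Y), xi Y ∘ Pim (Pim f) = f ∘ xi X;
  ax_xiiso : forall X : C,
      exists g : Hm X (Pi (Pi X)), g ∘ xi X = mid (Pi (Pi X)) /\ xi X ∘ g = mid X;
  ax_xiPi : forall X : C, xi (Pi X) = Pim (xi X) }.

Record supercat (k : comPzRingType) := SuperCat {
  scd :> scdata k;
  scax : sc_axioms scd }.

Section Lemmas.
Variables (k : comPzRingType) (C : supercat k).
Let A := scax C.

Lemma compNl (X Y Z : C) (g : Hm Y Z) (f : Hm X Y) : (- g) ∘ f = - (g ∘ f).
Proof. by rewrite -scaleN1r (ax_compZl A) scaleN1r. Qed.
Lemma compNr (X Y Z : C) (g : Hm Y Z) (f : Hm X Y) : g ∘ (- f) = - (g ∘ f).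
Proof. by rewrite -scaleN1r (ax_compZr A) scaleN1r. Qed.
Lemma PimN (X Y : C) (f : Hm X Y) : Pim (- f) = - Pim f.
Proof. by rewrite -scaleN1r (ax_PiZ A) scaleN1r. Qed.
End Lemmas.

Definition sc_rev k (C : supercat k) : scat :=
  @SCat (Ob C) (fun X Y => (Hm X Y : Type)) (@mid k C) (@mcomp k C)
        (@Pi k C) (@Pim k C) (fun X => - xi X).

Definition is_isoC k (C : supercat k) (X Y : C) (f : Hm X Y) : Prop :=
  exists g : Hm Y X, g ∘ f = mid X /\ f ∘ g = mid Y.

Definition ct_cond k (C : supercat k) (X : C) (phi : Hm (Pi X) X) : Prop :=
  is_isoC phi /\ phi ∘ Pim phi = xi X.

Record ctob k (C : supercat k) := CtOb {
  ctX : Ob C;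
  ctphi : Hm (Pi ctX) ctX;
  ctP : ct_cond ctphi }.
Arguments ctX {k C}. Arguments ctphi {k C}. Arguments ctP {k C}.

Record cthom k (C : supercat k) (Z Z' : ctob C) := CtHom {
  ctf : Hm (ctX Z) (ctX Z');
  ctfP : ctf ∘ ctphi Z = ctphi Z' ∘ Pim ctf }.
Arguments ctf {k C Z Z'}.

Section CT.
Variables (k : comPzRingType) (C : supercat k).
Let A := scax C.

Lemma ct_id_cond (Z : ctob C) : mid (ctX Z) ∘ ctphi Z = ctphi Z ∘ Pim (mid (ctX Z)).
Proof. by rewrite (ax_Pi1 A) (ax_comp1 A) (ax_compm1 A). Qed.

Lemma ct_comp_cond (Z1 Z2 Z3 : ctob C) (g : cthom Z2 Z3) (f : cthom Z1 Z2) :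
  (ctf g ∘ ctf f) ∘ ctphi Z1 = ctphi Z3 ∘ Pim (ctf g ∘ ctf f).
Proof.
by rewrite -(ax_compA A) (ctfP f) (ax_compA A) (ctfP g) -(ax_compA A) (ax_PiM A).
Qed.

Lemma ctPi_cond (Z : ctob C) : ct_cond (- ctphi Z).
Proof.
case: (ctP Z) => [[g [Hg1 Hg2]] He]; split.
  by exists (- g); rewrite compNl compNr opprK compNl compNr opprK.
by rewrite PimN compNl compNr opprK.
Qed.

Lemma ctPim_cond (Z Z' : ctob C) (f : cthom Z Z') :
  ctf f ∘ (- ctphi Z) = (- ctphi Z') ∘ Pim (ctf f).
Proof. by rewrite compNr compNl (ctfP f). Qed.

Lemma ctxi_cond (Z : ctob C) : mid (ctX Z) ∘ (- - ctphi Z) = ctphi Z ∘ Pim (mid (ctX Z)).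
Proof. by rewrite opprK ct_id_cond. Qed.

Definition ct_id (Z : ctob C) : cthom Z Z := CtHom (ct_id_cond Z).
Definition ct_comp (Z1 Z2 Z3 : ctob C) (g : cthom Z2 Z3) (f : cthom Z1 Z2) :
  cthom Z1 Z3 := CtHom (ct_comp_cond g f).
Definition ctPi (Z : ctob C) : ctob C := CtOb (ctPi_cond Z).
Definition ctPim (Z Z' : ctob C) (f : cthom Z Z') : cthom (ctPi Z) (ctPi Z') :=
  @CtHom k C (ctPi Z) (ctPi Z') (ctf f) (ctPim_cond f).
Definition ctxi (Z : ctob C) : cthom (ctPi (ctPi Z)) Z :=
  @CtHom k C (ctPi (ctPi Z)) Z (mid (ctX Z)) (ctxi_cond Z).
End CT.

Definition sc_ct k (C : supercat k) : scat :=
  @SCat (ctob C) (@cthom k C) (@ct_id k C) (@ct_comp k C)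
        (@ctPi k C) (@ctPim k C) (@ctxi k C).

Definition Phi k (C : supercat k) : fdata (sc_ct C) (sc_rev C) :=
  @FData (sc_ct C) (sc_rev C) (@ctX k C) (fun Z Z' f => ctf f).

(* phi_X : Pi (X (+) Pi X) -> X (+) Pi X, i.e. the matrix
   ( 0  xi_X ; id_{Pi X}  0 ) : Pi X (+) Pi^2 X -> X (+) Pi X
   precomposed with the canonical identification
   Pi (X (+) Pi X) = Pi X (+) Pi^2 X  (given by Pi of the projections). *)
Definition phiX k (C : supercat k) (X : C) : Hm (Pi (bsum X (Pi X))) (bsum X (Pi X)) :=
  (bi1 X (Pi X) ∘ xi X ∘ Pim (bp2 X (Pi X))) + (bi2 X (Pi X) ∘ Pim (bp1 X (Pi X))).

Definition psiX k (C : supercat k) (X : C) :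
    Hm (bsum (Pi X) (Pi (Pi X))) (bsum X (Pi X)) :=
  (bi1 X (Pi X) ∘ (- xi X) ∘ bp2 (Pi X) (Pi (Pi X)))
  + (bi2 X (Pi X) ∘ bp1 (Pi X) (Pi (Pi X))).

Definition sumf k (C : supercat k) (X Y : C) (f : Hm X Y) :
    Hm (bsum X (Pi X)) (bsum Y (Pi Y)) :=
  (bi1 Y (Pi Y) ∘ f ∘ bp1 X (Pi X)) + (bi2 Y (Pi Y) ∘ Pim f ∘ bp2 X (Pi X)).

Definition psi_mor_cond k (C : supercat k) : Prop :=
  forall (X Y : C) (f : Hm X Y), sumf f ∘ phiX X = phiX Y ∘ Pim (sumf f).

(* Psi X = (X (+) Pi X, phi_X), Psi f = f (+) Pi f; the proof arguments
   assert that these are objects / morphisms of C^ct. *)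
Definition PsiOb k (C : supercat k) (Ho : forall X : C, ct_cond (phiX X)) (X : C) :
  ctob C := CtOb (Ho X).

Definition Psi k (C : supercat k) (Ho : forall X : C, ct_cond (phiX X))
    (Hmor : psi_mor_cond C) : fdata (sc_rev C) (sc_ct C) :=
  @FData (sc_rev C) (sc_ct C) (PsiOb Ho)
    (fun X Y f => @CtHom k C (PsiOb Ho X) (PsiOb Ho Y) (sumf f) (Hmor X Y f)).

Definition biprod_diag k (C : supercat k) (A B S : C)
    (i1 : Hm A S) (i2 : Hm B S) (p1 : Hm S A) (p2 : Hm S B) : Prop :=
  [/\ p1 ∘ i1 = mid A, p2 ∘ i2 = mid B, p1 ∘ i2 = 0, p2 ∘ i1 = 0 &
      (i1 ∘ p1) + (i2 ∘ p2) = mid S].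

Definition iso_to_sum_C k (C : supercat k) (F : fdata (sc_rev C) (sc_rev C)) : Prop :=
  exists (i1 : forall X : C, Hm X (fo F X)) (i2 : forall X : C, Hm (Pi X) (fo F X))
         (p1 : forall X : C, Hm (fo F X) X) (p2 : forall X : C, Hm (fo F X) (Pi X)),
    (forall X : C, biprod_diag (i1 X) (i2 X) (p1 X) (p2 X)) /\
    (forall (X Y : C) (f : Hm X Y),
       [/\ (fm F f : Hm _ _) ∘ i1 X = i1 Y ∘ f,
           (fm F f : Hm _ _) ∘ i2 X = i2 Y ∘ Pim f,
           p1 Y ∘ (fm F f : Hm _ _) = f ∘ p1 X &
           p2 Y ∘ (fm F f : Hm _ _) = Pim f ∘ p2 X]).

(* G(Z) ~= Z (+) Pi^ct Z in C^ct, functorially in Z, for G : C^ct -> C^ct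
   (morphisms of C^ct are compared through their underlying morphisms,
   composition and sums in C^ct being those of C). *)
Definition iso_to_sum_ct k (C : supercat k) (G : fdata (sc_ct C) (sc_ct C)) : Prop :=
  exists (i1 : forall Z : ctob C, cthom Z (fo G Z))
         (i2 : forall Z : ctob C, cthom (ctPi Z) (fo G Z))
         (p1 : forall Z : ctob C, cthom (fo G Z) Z)
         (p2 : forall Z : ctob C, cthom (fo G Z) (ctPi Z)),
    (forall Z : ctob C,
       @biprod_diag k C (ctX Z) (ctX (ctPi Z)) (ctX (fo G Z))
         (ctf (i1 Z)) (ctf (i2 Z)) (ctf (p1 Z)) (ctf (p2 Z))) /\
    (forall (Z Z' : ctob C) (f : cthom Z Z'),
       [/\ ctf (fm G f) ∘ ctf (i1 Z) = ctf (i1 Z') ∘ ctf f,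
           ctf (fm G f) ∘ ctf (i2 Z) = ctf (i2 Z') ∘ ctf (ctPim f),
           ctf (p1 Z') ∘ ctf (fm G f) = ctf f ∘ ctf (p1 Z) &
           ctf (p2 Z') ∘ ctf (fm G f) = ctf (ctPim f) ∘ ctf (p2 Z)]).

(* All statements reduce to computations with 2x2 matrices of morphisms
   between biproducts.  Phi forgets phi, and phi^-1 intertwines Pi^ct with Pi
   because phi o Pi phi = xi; the sign of xi in C^rev absorbs the sign of
   Pi^ct.  The matrix phi_X satisfies phi_X o Pi phi_X = xi on X (+) Pi X
   (using xi_{Pi X} = Pi xi_X), so Psi X lies in C^ct, and psi_X is inverted
   by a matrix built from xi^-1.  For (Z, phi) in C^ct the columns
   (1, phi^-1) : Z -> Z (+) Pi Z and rows (1, phi) : Z (+) Pi Z -> Z are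
   morphisms of C^ct; together with the biproduct injection and projection
   they are the units and counits of both adjunctions, and, with halves and
   the sign-twisted pair (1, -phi^-1), (1, -phi), they split Psi Phi Z as
   Z (+) Pi^ct Z. *)
From Pilot Require Import Defs.
From mathcomp Require Import all_boot all_algebra.
Set Implicit Arguments. Unset Strict Implicit. Unset Printing Implicit Defensive.
Import GRing.Theory.
Local Open Scope ring_scope.

Section SuperCategoryCalculus.
Variables (k : comPzRingType) (C : supercat k).
Let A := scax C.

Lemma compA (X Y Z W : C) (h : Hm Z W) (g : Hm Y Z) (f : Hm X Y) :
  h ∘ (g ∘ f) = h ∘ g ∘ f.
Proof. exact: ax_compA. Qed.
Lemma mid_comp (X Y : C) (f : Hm X Y) : mid Y ∘ f = f. Proof. exact: ax_comp1. Qed.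
Lemma comp_mid (X Y : C) (f : Hm X Y) : f ∘ mid X = f. Proof. exact: ax_compm1. Qed.
Lemma compDl (X Y Z : C) (g1 g2 : Hm Y Z) (f : Hm X Y) :
  (g1 + g2) ∘ f = g1 ∘ f + g2 ∘ f.
Proof. exact: ax_compDl. Qed.
Lemma compDr (X Y Z : C) (g : Hm Y Z) (f1 f2 : Hm X Y) :
  g ∘ (f1 + f2) = g ∘ f1 + g ∘ f2.
Proof. exact: ax_compDr. Qed.
Lemma compZl (X Y Z : C) (a : k) (g : Hm Y Z) (f : Hm X Y) : (a *: g) ∘ f = a *: (g ∘ f).
Proof. exact: ax_compZl. Qed.
Lemma compZr (X Y Z : C) (a : k) (g : Hm Y Z) (f : Hm X Y) : g ∘ (a *: f) = a *: (g ∘ f).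
Proof. exact: ax_compZr. Qed.
Lemma comp0l (X Y Z : C) (f : Hm X Y) : (0 : Hm Y Z) ∘ f = 0.
Proof. by rewrite -(scale0r 0) compZl scale0r. Qed.
Lemma comp0r (X Y Z : C) (g : Hm Y Z) : g ∘ (0 : Hm X Y) = 0.
Proof. by rewrite -(scale0r 0) compZr scale0r. Qed.

Lemma Pim_mid (X : C) : Pim (mid X) = mid (Pi X). Proof. exact: ax_Pi1. Qed.
Lemma PimM (X Y Z : C) (g : Hm Y Z) (f : Hm X Y) : Pim (g ∘ f) = Pim g ∘ Pim f.
Proof. exact: ax_PiM. Qed.
Lemma PimMr (X Y Z W : C) (g : Hm Y Z) (f : Hm X Y) (h : Hm W (Pi X)) :
  Pim g ∘ (Pim f ∘ h) = Pim (g ∘ f) ∘ h.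
Proof. by rewrite PimM compA. Qed.
Lemma PimD (X Y : C) (f g : Hm X Y) : Pim (f + g) = Pim f + Pim g. Proof. exact: ax_PiD. Qed.
Lemma PimZ (X Y : C) (a : k) (f : Hm X Y) : Pim (a *: f) = a *: Pim f.
Proof. exact: ax_PiZ. Qed.
Lemma Pim0 (X Y : C) : Pim (0 : Hm X Y) = 0.
Proof. by rewrite -(scale0r 0) PimZ scale0r. Qed.

Lemma bp1_bi1 (X Y : C) : bp1 X Y ∘ bi1 X Y = mid X. Proof. exact: ax_b11. Qed.
Lemma bp2_bi2 (X Y : C) : bp2 X Y ∘ bi2 X Y = mid Y. Proof. exact: ax_b22. Qed.
Lemma bp1_bi2 (X Y : C) : bp1 X Y ∘ bi2 X Y = 0. Proof. exact: ax_b12. Qed.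
Lemma bp2_bi1 (X Y : C) : bp2 X Y ∘ bi1 X Y = 0. Proof. exact: ax_b21. Qed.
Lemma bsum_mid (X Y : C) : bi1 X Y ∘ bp1 X Y + bi2 X Y ∘ bp2 X Y = mid (bsum X Y).
Proof. exact: ax_bsum. Qed.
Lemma bp1_bi1r (X Y W : C) (f : Hm W X) : bp1 X Y ∘ (bi1 X Y ∘ f) = f.
Proof. by rewrite compA bp1_bi1 mid_comp. Qed.
Lemma bp2_bi2r (X Y W : C) (f : Hm W Y) : bp2 X Y ∘ (bi2 X Y ∘ f) = f.
Proof. by rewrite compA bp2_bi2 mid_comp. Qed.
Lemma bp1_bi2r (X Y W : C) (f : Hm W Y) : bp1 X Y ∘ (bi2 X Y ∘ f) = 0.
Proof. by rewrite compA bp1_bi2 comp0l. Qed.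
Lemma bp2_bi1r (X Y W : C) (f : Hm W X) : bp2 X Y ∘ (bi1 X Y ∘ f) = 0.
Proof. by rewrite compA bp2_bi1 comp0l. Qed.

Lemma biprod_bsum (X Y : C) : biprod_diag (bi1 X Y) (bi2 X Y) (bp1 X Y) (bp2 X Y).
Proof.
by split; [exact: bp1_bi1 | exact: bp2_bi2 | exact: bp1_bi2 | exact: bp2_bi1 | exact: bsum_mid].
Qed.

Lemma biprod_Pim (X Y S : C) (i1 : Hm X S) (i2 : Hm Y S) (p1 : Hm S X) (p2 : Hm S Y) :
  biprod_diag i1 i2 p1 p2 -> biprod_diag (Pim i1) (Pim i2) (Pim p1) (Pim p2).
Proof.
by case=> e11 e22 e12 e21 e; split; rewrite -?PimM -?PimD ?e11 ?e22 ?e12 ?e21 ?e ?Pim_mid ?Pim0.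
Qed.

Section BiproductExtensionality.
Variables (X Y S W : C) (i1 : Hm X S) (i2 : Hm Y S) (p1 : Hm S X) (p2 : Hm S Y).
Hypothesis biprod : biprod_diag i1 i2 p1 p2.

Lemma biprod_homl_ext (f g : Hm S W) : f ∘ i1 = g ∘ i1 -> f ∘ i2 = g ∘ i2 -> f = g.
Proof.
case: biprod => _ _ _ _ e fi1 fi2.
by rewrite -(comp_mid f) -(comp_mid g) -e !compDr !compA fi1 fi2.
Qed.

Lemma biprod_homr_ext (f g : Hm W S) : p1 ∘ f = p1 ∘ g -> p2 ∘ f = p2 ∘ g -> f = g.
Proof.
case: biprod => _ _ _ _ e p1f p2f.
by rewrite -(mid_comp f) -(mid_comp g) -e !compDl -!compA p1f p2f.
Qed.
End BiproductExtensionality.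

Lemma bsum_hom_ext (X Y W : C) (f g : Hm (bsum X Y) W) :
  f ∘ bi1 X Y = g ∘ bi1 X Y -> f ∘ bi2 X Y = g ∘ bi2 X Y -> f = g.
Proof. exact: (biprod_homl_ext (biprod_bsum X Y)). Qed.

Lemma Pi_bsum_hom_ext (X Y W : C) (f g : Hm (Pi (bsum X Y)) W) :
  f ∘ Pim (bi1 X Y) = g ∘ Pim (bi1 X Y) -> f ∘ Pim (bi2 X Y) = g ∘ Pim (bi2 X Y) -> f = g.
Proof. exact: (biprod_homl_ext (biprod_Pim (biprod_bsum X Y))). Qed.

Lemma xi_nat (X Y : C) (f : Hm X Y) : xi Y ∘ Pim (Pim f) = f ∘ xi X.
Proof. exact: ax_xinat. Qed.
Lemma xi_natr (X Y W : C) (f : Hm X Y) (h : Hm W (Pi (Pi X))) :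
  xi Y ∘ (Pim (Pim f) ∘ h) = f ∘ (xi X ∘ h).
Proof. by rewrite !compA xi_nat. Qed.
Lemma xi_Pi (X : C) : xi (Pi X) = Pim (xi X). Proof. exact: ax_xiPi. Qed.

Lemma xi_invertible (X : C) :
  exists g : Hm X (Pi (Pi X)), (g ∘ xi X == mid _) && (xi X ∘ g == mid X).
Proof. by have [g [gxi xig]] := ax_xiiso A X; exists g; rewrite gxi xig !eqxx. Qed.

Definition xiinv (X : C) : Hm X (Pi (Pi X)) := xchoose (xi_invertible X).

Lemma xiinv_xi (X : C) : xiinv X ∘ xi X = mid _.
Proof. by case/andP: (xchooseP (xi_invertible X)) => /eqP. Qed.
Lemma xi_xiinv (X : C) : xi X ∘ xiinv X = mid _.
Proof. by case/andP: (xchooseP (xi_invertible X)) => _ /eqP. Qed.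
Lemma xiinv_xir (X W : C) (f : Hm W (Pi (Pi X))) : xiinv X ∘ (xi X ∘ f) = f.
Proof. by rewrite compA xiinv_xi mid_comp. Qed.
Lemma xi_xiinvr (X W : C) (f : Hm W X) : xi X ∘ (xiinv X ∘ f) = f.
Proof. by rewrite compA xi_xiinv mid_comp. Qed.

Lemma xiinv_nat (X Y : C) (f : Hm X Y) : xiinv Y ∘ f = Pim (Pim f) ∘ xiinv X.
Proof.
rewrite -[_ ∘ f]comp_mid -(xi_xiinv X) compA -(compA _ f) -xi_nat.
by rewrite !compA xiinv_xi mid_comp.
Qed.

Lemma inv_uniq (X Y : C) (f : Hm X Y) (g h : Hm Y X) :
  g ∘ f = mid X -> f ∘ h = mid Y -> g = h.
Proof. by move=> gf fh; rewrite -(comp_mid g) -fh compA gf mid_comp. Qed.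

Lemma intertwine_inv (X Y : C) (p : Hm (Pi X) X) (q : Hm (Pi Y) Y) (f : Hm X Y) (g : Hm Y X) :
  f ∘ p = q ∘ Pim f -> g ∘ f = mid X -> f ∘ g = mid Y -> g ∘ q = p ∘ Pim g.
Proof.
move=> fp gf fg.
by rewrite -[g ∘ q]comp_mid -Pim_mid -fg PimM !compA -(compA g) -fp compA gf mid_comp.
Qed.

Lemma add_halves (u : k) (X Y : C) (f : Hm X Y) : 2%:R * u = 1 -> u *: f + u *: f = f.
Proof. by move=> two_u; rewrite -scalerDl -mulr2n -mulr_natl two_u scale1r. Qed.

End SuperCategoryCalculus.

Ltac comp_simpl := repeat progress rewrite -?compA ?compDl ?compDr ?compZl ?compZr
  ?compNl ?compNr ?comp0l ?comp0r ?mid_comp ?comp_mid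
  ?PimD ?PimZ ?PimN ?Pim0 ?Pim_mid ?PimMr -?PimM
  ?bp1_bi1 ?bp2_bi2 ?bp1_bi2 ?bp2_bi1 ?bp1_bi1r ?bp2_bi2r ?bp1_bi2r ?bp2_bi1r
  ?xi_nat ?xi_natr ?xiinv_xi ?xi_xiinv ?xiinv_xir ?xi_xiinvr
  ?addr0 ?add0r ?oppr0 ?opprK ?scaler0 ?scale0r ?scaleNr ?scalerN ?scalerDr.

Section CliffordTwist.
Variables (k : comPzRingType) (C : supercat k).

Lemma ctf_inj (Z Z' : ctob C) : injective (@ctf k C Z Z').
Proof. by case=> f fP [g gP] /= fg; subst g; congr CtHom; exact: eq_irrelevance. Qed.

Lemma ctphi_invertible (Z : ctob C) : exists g : Hm (ctX Z) (Pi (ctX Z)),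
  (g ∘ ctphi Z == mid _) && (ctphi Z ∘ g == mid _).
Proof. by have [[g [gphi phig]] _] := ctP Z; exists g; rewrite gphi phig !eqxx. Qed.

Definition ctinv (Z : ctob C) : Hm (ctX Z) (Pi (ctX Z)) := xchoose (ctphi_invertible Z).

Lemma ctinv_phi (Z : ctob C) : ctinv Z ∘ ctphi Z = mid _.
Proof. by case/andP: (xchooseP (ctphi_invertible Z)) => /eqP. Qed.
Lemma ctphi_inv (Z : ctob C) : ctphi Z ∘ ctinv Z = mid _.
Proof. by case/andP: (xchooseP (ctphi_invertible Z)) => _ /eqP. Qed.
Lemma ctinv_phir (Z : ctob C) W (f : Hm W (Pi (ctX Z))) : ctinv Z ∘ (ctphi Z ∘ f) = f.
Proof. by rewrite compA ctinv_phi mid_comp. Qed.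
Lemma ctphi_invr (Z : ctob C) W (f : Hm W (ctX Z)) : ctphi Z ∘ (ctinv Z ∘ f) = f.
Proof. by rewrite compA ctphi_inv mid_comp. Qed.

Lemma ctphi_Pim (Z : ctob C) : ctphi Z ∘ Pim (ctphi Z) = xi (ctX Z).
Proof. by case: (ctP Z). Qed.

Lemma ctinv_Pi (Z : ctob C) : ctinv (ctPi Z) = - ctinv Z.
Proof.
apply: (@inv_uniq _ _ _ _ (ctphi (ctPi Z))); first exact: ctinv_phi.
by rewrite /= compNl compNr opprK ctphi_inv.
Qed.

Lemma ctf_nat (Z Z' : ctob C) (f : cthom Z Z') : ctf f ∘ ctphi Z = ctphi Z' ∘ Pim (ctf f).
Proof. exact: ctfP. Qed.

Lemma ctf_natr (Z Z' : ctob C) (f : cthom Z Z') W (h : Hm W (Pi (ctX Z))) :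
  ctf f ∘ (ctphi Z ∘ h) = ctphi Z' ∘ (Pim (ctf f) ∘ h).
Proof. by rewrite !compA ctf_nat. Qed.

Lemma ctinv_nat (Z Z' : ctob C) (f : cthom Z Z') :
  ctinv Z' ∘ ctf f = Pim (ctf f) ∘ ctinv Z.
Proof.
rewrite -[ctinv Z' ∘ _]comp_mid -(ctphi_inv Z) !compA -(compA _ (ctf f)) ctf_nat.
by rewrite compA ctinv_phi mid_comp.
Qed.

Lemma ct_iso (Z Z' : ctob C) (f : cthom Z Z') (g : Hm (ctX Z') (ctX Z)) :
  g ∘ ctf f = mid _ -> ctf f ∘ g = mid _ -> @is_iso_s (sc_ct C) Z Z' f.
Proof.
move=> gf fg; exists (@CtHom k C Z' Z g (intertwine_inv (ctf_nat f) gf fg)).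
by split; apply: ctf_inj.
Qed.

Lemma ct_scale_cond (a : k) (Z Z' : ctob C) (f : cthom Z Z') :
  (a *: ctf f) ∘ ctphi Z = ctphi Z' ∘ Pim (a *: ctf f).
Proof. by rewrite compZl PimZ compZr ctf_nat. Qed.

Definition ct_scale (a : k) (Z Z' : ctob C) (f : cthom Z Z') : cthom Z Z' :=
  CtHom (ct_scale_cond a f).

Lemma Phi_superfunctor : @is_superfunctor (sc_ct C) (sc_rev C) (Phi C) ctinv.
Proof.
split=> //.
- by move=> Z Z' f /=; exact: ctinv_nat.
- by move=> Z; exists (ctphi Z); rewrite /= ctinv_phi ctphi_inv.
- move=> Z /=; rewrite ctinv_Pi !compNr compNl opprK -ctphi_Pim.
  by rewrite -!compA PimMr ctphi_inv Pim_mid mid_comp ctphi_inv.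
Qed.

Lemma PiPhi_iso_PhiPi :
  nat_iso (fcomp (fPi (sc_rev C)) (Phi C)) (fcomp (Phi C) (fPi (sc_ct C))).
Proof.
exists (fun Z : ctob C => ctphi Z); split; first by move=> Z Z' f /=; rewrite ctf_nat.
by move=> Z; exists (ctinv Z); rewrite /= ctinv_phi ctphi_inv.
Qed.

Lemma PhiPi_iso_Phi : nat_iso (fcomp (Phi C) (fPi (sc_ct C))) (Phi C).
Proof.
exists (fun Z : ctob C => mid (ctX Z)); split; first by move=> Z Z' f /=; rewrite mid_comp comp_mid.
by move=> Z; exists (mid (ctX Z)); rewrite /= mid_comp.
Qed.

End CliffordTwist.
Arguments ct_iso {k C Z Z'} f {g}.

Ltac ct_simpl := repeat progress (comp_simpl;
  rewrite ?ctinv_Pi ?ctinv_phi ?ctphi_inv ?ctinv_phir ?ctphi_invr ?ctf_natr).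

Section PsiFunctor.
Variables (k : comPzRingType) (C : supercat k).

Lemma phiX_ct_cond (X : C) : ct_cond (phiX X).
Proof.
split.
  exists (Pim (bi1 X (Pi X)) ∘ bp2 X (Pi X) + Pim (bi2 X (Pi X)) ∘ (xiinv X ∘ bp1 X (Pi X))).
  split; rewrite /phiX.
    by apply: Pi_bsum_hom_ext; comp_simpl.
  by apply: bsum_hom_ext; comp_simpl.
rewrite /phiX; apply: (biprod_homl_ext (biprod_Pim (biprod_Pim (biprod_bsum _ _)))).
  by comp_simpl.
by comp_simpl; rewrite xi_Pi.
Qed.

Lemma sumf_ct_hom : psi_mor_cond C.
Proof.
move=> X Y f; rewrite /sumf /phiX.
by apply: Pi_bsum_hom_ext; comp_simpl.
Qed.

Local Notation PsiC := (Psi phiX_ct_cond sumf_ct_hom).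
Local Notation PsiOb := (Defs.PsiOb phiX_ct_cond).

Lemma sumf_mid (X : C) : sumf (mid X) = mid _.
Proof. by apply: bsum_hom_ext; rewrite /sumf; comp_simpl. Qed.

Lemma sumfM (X Y Z : C) (g : Hm Y Z) (f : Hm X Y) : sumf (g ∘ f) = sumf g ∘ sumf f.
Proof. by apply: bsum_hom_ext; rewrite /sumf; comp_simpl. Qed.

Lemma psiX_ct_hom (X : C) : psiX X ∘ phiX (Pi X) = (- phiX X) ∘ Pim (psiX X).
Proof.
rewrite /psiX /phiX.
by apply: Pi_bsum_hom_ext; comp_simpl; rewrite ?xi_Pi.
Qed.

Definition alphaPsi (X : C) : cthom (PsiOb (Pi X)) (ctPi (PsiOb X)) :=
  @CtHom k C (PsiOb (Pi X)) (ctPi (PsiOb X)) (psiX X) (psiX_ct_hom X).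

Definition psiXinv (X : C) : Hm (bsum X (Pi X)) (bsum (Pi X) (Pi (Pi X))) :=
  bi1 (Pi X) (Pi (Pi X)) ∘ bp2 X (Pi X) - bi2 (Pi X) (Pi (Pi X)) ∘ (xiinv X ∘ bp1 X (Pi X)).

Lemma psiXinv_psiX (X : C) : psiXinv X ∘ psiX X = mid _.
Proof. by apply: bsum_hom_ext; rewrite /psiXinv /psiX; comp_simpl. Qed.
Lemma psiX_psiXinv (X : C) : psiX X ∘ psiXinv X = mid _.
Proof. by apply: bsum_hom_ext; rewrite /psiXinv /psiX; comp_simpl. Qed.

Lemma Psi_superfunctor : @is_superfunctor (sc_rev C) (sc_ct C) PsiC alphaPsi.
Proof.
split.
- by split=> [X | X Y Z g f]; apply: ctf_inj; rewrite /= (sumf_mid, sumfM).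
- move=> X Y f; apply: ctf_inj; rewrite /= /psiX /sumf.
  by apply: bsum_hom_ext; comp_simpl.
- by move=> X; exact: (ct_iso (alphaPsi X) (psiXinv_psiX X) (psiX_psiXinv X)).
- move=> X; apply: ctf_inj; rewrite /= /psiX /sumf.
  by apply: bsum_hom_ext; comp_simpl; rewrite ?xi_Pi.
Qed.

Lemma PhiPsi_iso_sum : iso_to_sum_C (fcomp (Phi C) PsiC).
Proof.
exists (fun X => bi1 X (Pi X)), (fun X => bi2 X (Pi X)),
       (fun X => bp1 X (Pi X)), (fun X => bp2 X (Pi X)).
by split=> [X | X Y f]; [exact: biprod_bsum | rewrite /= /sumf; split; comp_simpl].
Qed.

Definition psiXinv_ct (X : C) : cthom (ctPi (PsiOb X)) (PsiOb (Pi X)) :=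
  @CtHom k C (ctPi (PsiOb X)) (PsiOb (Pi X)) (psiXinv X)
    (intertwine_inv (psiX_ct_hom X) (psiXinv_psiX X) (psiX_psiXinv X)).

Lemma PiPsi_iso_PsiPi :
  nat_iso (fcomp (fPi (sc_ct C)) PsiC) (fcomp PsiC (fPi (sc_rev C))).
Proof.
exists psiXinv_ct; split=> [X Y f | X].
  apply: ctf_inj; rewrite /= /psiXinv /sumf.
  by apply: bsum_hom_ext; comp_simpl; rewrite ?xiinv_nat.
exact: (ct_iso (psiXinv_ct X) (psiX_psiXinv X) (psiXinv_psiX X)).
Qed.

(* Psi (Pi X) = Pi X (+) Pi^2 X ~= Pi X (+) X ~= X (+) Pi X = Psi X, via xi_X *)
Definition swapX (X : C) : Hm (bsum (Pi X) (Pi (Pi X))) (bsum X (Pi X)) :=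
  bi1 X (Pi X) ∘ (xi X ∘ bp2 (Pi X) (Pi (Pi X))) + bi2 X (Pi X) ∘ bp1 (Pi X) (Pi (Pi X)).
Definition swapXinv (X : C) : Hm (bsum X (Pi X)) (bsum (Pi X) (Pi (Pi X))) :=
  bi1 (Pi X) (Pi (Pi X)) ∘ bp2 X (Pi X) + bi2 (Pi X) (Pi (Pi X)) ∘ (xiinv X ∘ bp1 X (Pi X)).

Lemma swapX_ct_hom (X : C) : swapX X ∘ phiX (Pi X) = phiX X ∘ Pim (swapX X).
Proof.
rewrite /swapX /phiX.
by apply: Pi_bsum_hom_ext; comp_simpl; rewrite ?xi_Pi.
Qed.
Lemma swapXinv_swapX (X : C) : swapXinv X ∘ swapX X = mid _.
Proof. by apply: bsum_hom_ext; rewrite /swapX /swapXinv; comp_simpl. Qed.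
Lemma swapX_swapXinv (X : C) : swapX X ∘ swapXinv X = mid _.
Proof. by apply: bsum_hom_ext; rewrite /swapX /swapXinv; comp_simpl. Qed.

Definition swapX_ct (X : C) : cthom (PsiOb (Pi X)) (PsiOb X) :=
  @CtHom k C (PsiOb (Pi X)) (PsiOb X) (swapX X) (swapX_ct_hom X).

Lemma PsiPi_iso_Psi : nat_iso (fcomp PsiC (fPi (sc_rev C))) PsiC.
Proof.
exists swapX_ct; split=> [X Y f | X].
  by apply: ctf_inj; rewrite /= /swapX /sumf; apply: bsum_hom_ext; comp_simpl.
exact: (ct_iso (swapX_ct X) (swapXinv_swapX X) (swapX_swapXinv X)).
Qed.

Lemma ct_unit_cond (Z : ctob C) :
  (bi1 _ _ + bi2 _ _ ∘ ctinv Z) ∘ ctphi Z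
  = phiX (ctX Z) ∘ Pim (bi1 _ _ + bi2 _ _ ∘ ctinv Z).
Proof. by rewrite /phiX -ctphi_Pim; apply: (biprod_homr_ext (biprod_bsum _ _)); ct_simpl. Qed.

Lemma ct_counit_cond (Z : ctob C) :
  (bp1 _ _ + ctphi Z ∘ bp2 _ _) ∘ phiX (ctX Z)
  = ctphi Z ∘ Pim (bp1 _ _ + ctphi Z ∘ bp2 _ _).
Proof.
rewrite /phiX -ctphi_Pim.
by apply: Pi_bsum_hom_ext; ct_simpl.
Qed.

Definition ct_unit (Z : ctob C) : cthom Z (PsiOb (ctX Z)) :=
  @CtHom k C Z (PsiOb (ctX Z)) _ (ct_unit_cond Z).
Definition ct_counit (Z : ctob C) : cthom (PsiOb (ctX Z)) Z :=
  @CtHom k C (PsiOb (ctX Z)) Z _ (ct_counit_cond Z).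

Lemma Phi_Psi_adjoint : adjoint (Phi C) PsiC.
Proof.
exists ct_unit, (fun X : C => bp1 X (Pi X)); split.
- by move=> Z Z' f; apply: ctf_inj; rewrite /= /sumf; ct_simpl; rewrite ctinv_nat.
- by move=> X Y f /=; rewrite /sumf; comp_simpl.
- by move=> Z /=; comp_simpl.
- move=> Y; apply: ctf_inj; rewrite /= /sumf; ct_simpl.
  have -> : Pim (bp1 Y (Pi Y)) = bp2 Y (Pi Y) ∘ ctphi (PsiOb Y) by rewrite /= /phiX; comp_simpl.
  by rewrite -!compA (ctphi_inv (PsiOb Y)) comp_mid; exact: bsum_mid.
Qed.

Lemma Psi_Phi_adjoint : adjoint PsiC (Phi C).
Proof.
exists (fun X : C => bi1 X (Pi X)), ct_counit; split.
- by move=> X Y f /=; rewrite /sumf; comp_simpl.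
- by move=> Z Z' f; apply: ctf_inj; rewrite /= /sumf; ct_simpl.
- by move=> X; apply: ctf_inj; rewrite /= /sumf /phiX; comp_simpl; exact: bsum_mid.
- by move=> Z /=; comp_simpl.
Qed.

Variables (u : k) (two_u : 2%:R * u = 1).

Lemma PsiPhi_iso_sum : iso_to_sum_ct (fcomp PsiC (Phi C)).
Proof.
exists ct_unit, (fun Z => ct_unit (ctPi Z)),
       (fun Z => ct_scale u (ct_counit Z)), (fun Z => ct_scale u (ct_counit (ctPi Z))).
split=> [Z | Z Z' f]; rewrite /=.
  split; ct_simpl; rewrite ?add_halves ?subrr //.
  apply: bsum_hom_ext; ct_simpl.
    by rewrite addrACA subrr addr0 add_halves.
  by rewrite addrACA subrr add0r add_halves.
by rewrite /sumf; split; ct_simpl; rewrite ?ctinv_nat.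
Qed.

End PsiFunctor.

Unset Implicit Arguments.
Set Strict Implicit.
Theorem mainTheorem10 (k : comPzRingType) (C : supercat k) :
  (exists alpha : forall Z : ctob C, Hm (ctX Z) (Pi (ctX Z)),
     (forall Z : ctob C, alpha Z ∘ ctphi Z = mid (Pi (ctX Z)) /\
                         ctphi Z ∘ alpha Z = mid (ctX Z)) /\
     @is_superfunctor (sc_ct C) (sc_rev C) (Phi C) alpha)
  /\
  ((exists u : k, 2%:R * u = 1) ->
   exists (Ho : forall X : C, ct_cond (phiX X)) (Hmor : psi_mor_cond C),
     (exists alpha : forall X : C,
         cthom (fo (Psi Ho Hmor) (Pi X)) (ctPi (fo (Psi Ho Hmor) X)),
        (forall X : C, ctf (alpha X) = psiX X) /\
        @is_superfunctor (sc_rev C) (sc_ct C) (Psi Ho Hmor) alpha)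
     /\ iso_to_sum_C (fcomp (Phi C) (Psi Ho Hmor))
     /\ iso_to_sum_ct (fcomp (Psi Ho Hmor) (Phi C))
     /\ nat_iso (fcomp (fPi (sc_rev C)) (Phi C)) (fcomp (Phi C) (fPi (sc_ct C)))
     /\ nat_iso (fcomp (Phi C) (fPi (sc_ct C))) (Phi C)
     /\ nat_iso (fcomp (fPi (sc_ct C)) (Psi Ho Hmor)) (fcomp (Psi Ho Hmor) (fPi (sc_rev C)))
     /\ nat_iso (fcomp (Psi Ho Hmor) (fPi (sc_rev C))) (Psi Ho Hmor)
     /\ adjoint (Phi C) (Psi Ho Hmor)
     /\ adjoint (Psi Ho Hmor) (Phi C)).
Proof.
split.
  exists (@ctinv k C); split; last exact: Phi_superfunctor.
  by move=> Z; rewrite ctinv_phi ctphi_inv.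
case=> u two_u; exists (@phiX_ct_cond k C), (@sumf_ct_hom k C).
split; first by exists (@alphaPsi k C); split=> //; exact: Psi_superfunctor.
split; first exact: PhiPsi_iso_sum.
split; first exact: PsiPhi_iso_sum two_u.
split; first exact: PiPhi_iso_PhiPi.
split; first exact: PhiPi_iso_Phi.
split; first exact: PiPsi_iso_PsiPi.
split; first exact: PsiPi_iso_Psi.
by split; [exact: Phi_Psi_adjoint | exact: Psi_Phi_adjoint].
Qed.
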